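(* Let $A\in\mathbb{R}^{n\times d}$, $b\in\mathbb{R}^n$, and suppose $Ax=b$ admits a solution $x^*$. Let $w$ be a random variable in $\mathbb{R}^d$, and let $\mathcal{L}(w) = \mathrm{span}\lbrace z\in\mathbb{R}^n : \mathbb{P}[z'Aw=0]=1\rbrace$ and $\mathcal{C}(w) = \mathcal{L}(w)^\perp$. Let $\lbrace w_\ell:\ell\geq0\rbrace$ be random variables in $\mathbb{R}^d$ with $\mathbb{P}[Aw_\ell\in\mathcal{C}(w)]=1$ for all $\ell$. Let $x_0\in\mathbb{R}^d$ be arbitrary, $$x_{k+1} = x_k + \frac{w_kw_k'A'(b-Ax_k)}{\|Aw_k\|_2^2},$$ and $r_k = Ax_k - b$ for $k\geq0$. Define $\tau_0 = 0$, $\tau_1 = \min\lbrace k\geq0 : \mathrm{span}\lbrace Aw_0,\ldots,Aw_k\rbrace = \mathcal{C}(w)\rbrace$, and for $\ell\geq2$, $\tau_\ell = \min\lbrace k>\tau_{\ell-1} : \mathrm{span}\lbrace Aw_{\tau_{\ell-1}+1},\ldots,Aw_k\rbrace = \mathcal{C}(w)\rbrace$ if $\tau_{\ell-1}<\infty$, else $\tau_\ell = \infty$. For finite stopping times, let $\mathcal{F}_\ell$ be the set of matrices whose columns form a maximal linearly independent subset of $\lbrace Aw_{\tau_{\ell-1}+1}/\|Aw_{\tau_{\ell-1}+1}\|_2,\ldots,Aw_{\tau_\ell}/\|Aw_{\tau_\ell}\|_2\rbrace$, and $\gamma_\ell = 1-\min_{F\in\mathcal{F}_\ell}\det(F'F)$.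 Then $\gamma_\ell\in[0,1)$ and, for any $\ell$, on the event $\lbrace\tau_\ell<\infty\rbrace$, $$\|r_{\tau_\ell+1} - P_{\mathcal{L}(w)}r_0\|_2^2 \leq \Big(\prod_{j=1}^\ell\gamma_j\Big)\|P_{\mathcal{C}(w)}r_0\|_2^2.$$ Therefore, for any $k$, $\|r_k - P_{\mathcal{L}(w)}r_0\|_2^2 \leq \big(\prod_{j=1}^{L(k)}\gamma_j\big)\|P_{\mathcal{C}(w)}r_0\|_2^2$, where $L(k) = \max\lbrace\ell : k\geq\tau_\ell+1\rbrace$, on the event $\lbrace\tau_{L(k)}<\infty\rbrace$.
   Context: $P_W$ is orthogonal projection onto $W$; $A'$ is the transpose. The iteration presupposes $Aw_k\neq0$. *)

From HB Require Import structures.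
From mathcomp Require Import all_boot all_order all_algebra.
From mathcomp Require Import boolp classical_sets reals ereal topology
  measure lebesgue_measure probability.
Set Implicit Arguments. Unset Strict Implicit. Unset Printing Implicit Defensive.
Import Order.TTheory GRing.Theory Num.Theory.
Local Open Scope ring_scope.
Local Open Scope classical_set_scope.

(* Vectors of R^n are column vectors 'cV_n; subspaces of R^n are represented
   (mxalgebra style) by the row space of a square matrix, whose rows are the
   transposes of the vectors of the subspace. *)

Definition sqn {R : realType} {n : nat} (v : 'cV[R]_n) : R := (v^T *m v) 0 0.
Definition nrm {R : realType} {n : nat} (v : 'cV[R]_n) : R := Num.sqrt (sqn v).

Definition spanP {R : realType} {n : nat} (S : set 'cV[R]_n) (v : 'cV[R]_n) : Prop :=
  exists m (Z : 'M[R]_(m, n)), (forall i, S (row i Z)^T) /\ (v^T <= Z)%MS.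

Definition subspace_of {R : realType} {n : nat} (Q : 'cV[R]_n -> Prop) : 'M[R]_n :=
  xget 0 (fun M : 'M[R]_n => forall v : 'cV[R]_n, (v^T <= M)%MS <-> Q v).

Definition orthc {R : realType} {n : nat} (W : 'M[R]_n) : 'M[R]_n :=
  subspace_of (fun y : 'cV[R]_n => forall z : 'cV[R]_n, (z^T <= W)%MS -> z^T *m y = 0).

Definition oproj {R : realType} {n : nat} (W : 'M[R]_n) (r : 'cV[R]_n) : 'cV[R]_n :=
  xget 0 (fun p : 'cV[R]_n => (p^T <= W)%MS /\
           forall z : 'cV[R]_n, (z^T <= W)%MS -> z^T *m (r - p) = 0).

Section Kaczmarz.
Context {R : realType} {dT : measure_display} {T : measurableType dT}
  (P : probability T R) {n d : nat} (A : 'M[R]_(n, d)) (b : 'cV[R]_n).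

Definition Lset (w : T -> 'cV[R]_d) : set 'cV[R]_n :=
  [set z | P [set om | z^T *m (A *m w om) = 0] = 1%E].

Definition Lmx (w : T -> 'cV[R]_d) : 'M[R]_n := subspace_of (spanP (Lset w)).
Definition Cmx (w : T -> 'cV[R]_d) : 'M[R]_n := orthc (Lmx w).

Variables (w : T -> 'cV[R]_d) (ws : nat -> T -> 'cV[R]_d) (x0 : 'cV[R]_d).

Fixpoint xit (om : T) (k : nat) : 'cV[R]_d :=
  match k with
  | 0 => x0
  | k'.+1 => let xk := xit om k' in let wk := ws k' om in
      xk + (sqn (A *m wk))^-1 *: (wk *m wk^T *m A^T *m (b - A *m xk))
  end.

Definition res (om : T) (k : nat) : 'cV[R]_n := A *m xit om k - b.

Definition spanmx (om : T) (s e : nat) : 'M[R]_n :=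
  (\sum_(s <= i < e.+1) <<(A *m ws i om)^T>>)%MS.

Definition spanEq (om : T) (s e : nat) : bool := (spanmx om s e == Cmx w)%MS.

(* min { k : p k }, or None (= infinity) if the set is empty *)
Definition first_min (p : pred nat) : option nat :=
  match pselect (exists k, p k) with
  | left h => Some (ex_minn h)
  | right _ => None
  end.

Fixpoint tau (om : T) (l : nat) : option nat :=
  match l with
  | 0 => Some 0%N
  | l'.+1 =>
    match l' with
    | 0 => first_min (fun k => spanEq om 0 k)
    | _ => match tau om l' with
           | Some t => first_min (fun k => (t < k)%N && spanEq om t.+1 k)
           | None => None
           end
    end
  end.

Definition Uset (om : T) (s e : nat) : set 'cV[R]_n :=
  [set u | exists i, (s <= i <= e)%N /\ u = (nrm (A *m ws i om))^-1 *: (A *m ws i om)].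

Definition isF (om : T) (s e : nat) (m : nat) (F : 'M[R]_(n, m)) : Prop :=
  [/\ forall j, Uset om s e (col j F),
      row_free F^T &
      forall u, Uset om s e u ->
        (exists j, col j F = u) \/ ~~ row_free (col_mx F^T u^T)].

Definition detset (om : T) (s e : nat) : set R :=
  [set x | exists m (F : 'M[R]_(n, m)), isF om s e F /\ x = \det (F^T *m F)].

(* gamma_l = 1 - min_{F in F_l} det(F'F); the l-th block is
   {tau_{l-1}+1, ..., tau_l} for l >= 2 and {0, ..., tau_1} for l = 1 *)
Definition gamma (om : T) (l : nat) : R :=
  match tau om l, tau om l.-1 with
  | Some e, Some t => 1 - inf (detset om (if l == 1%N then 0%N else t.+1) e)
  | _, _ => 0
  end.

(* L(k) = max { l : k >= tau_l + 1 }  (= 0 when the set is empty, i.e. k = 0) *)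
Definition Lk (om : T) (k : nat) : nat :=
  \max_(l < k.+1 | if tau om l is Some t then (t < k)%N else false) (l : nat).

End Kaczmarz.

(* Almost surely every [u_k = A w_k] is a nonzero vector of [C(w) = L(w)^perp].
   The update of [x_k] replaces the residual [r_k] by its orthogonal projection
   onto [u_k^perp]; hence [r_k - P_L r_0] starts at [P_C r_0], stays in [C(w)] and
   is moved by these projections only.  Over a block [tau_(l-1)+1, ..., tau_l] the
   [u_k] span [C(w)], and Meany's inequality bounds the product of the projections
   on that span by [1 - det(F'F)] for a maximal independent family [F] of the
   normalized [u_k]; it is proved by adding one vector [u] at a time, which
   multiplies the Gram determinant by [|b|^2 / |u|^2], [b] being the component of
   [u] orthogonal to the span of the later vectors.  Finally [gamma_l < 1]
   because only finitely many such [F] exist, each with a positive Gram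
   determinant. *)

From HB Require Import structures.
From mathcomp Require Import all_boot all_order all_algebra.
From mathcomp Require Import boolp classical_sets reals ereal topology
  measure lebesgue_measure probability.
From mathcomp Require Import ring lra zify.
From mathcomp Require Import measurable_realfun measurable_fun_approximation.
Import Order.TTheory GRing.Theory Num.Theory.
Local Open Scope ring_scope.
Local Open Scope classical_set_scope.

Set Implicit Arguments. Unset Strict Implicit. Unset Printing Implicit Defensive.


Section Euclid.
Variables (R : realType) (n : nat).
Implicit Types (u v w x y z : 'cV[R]_n).

Definition dot u v : R := (u^T *m v) 0 0.

Lemma dotE u v : dot u v = \sum_i u i 0 * v i 0.
Proof. by rewrite /dot mxE; apply: eq_bigr => i _; rewrite mxE. Qed.

Lemma sqnE v : sqn v = dot v v. Proof. by []. Qed.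

Lemma dotC u v : dot u v = dot v u.
Proof. by rewrite !dotE; apply: eq_bigr => i _; rewrite mulrC. Qed.

Lemma dotDr u v w : dot u (v + w) = dot u v + dot u w.
Proof. by rewrite !dotE -big_split; apply: eq_bigr => i _; rewrite mxE mulrDr. Qed.

Lemma dotZr a u v : dot u (a *: v) = a * dot u v.
Proof. by rewrite !dotE mulr_sumr; apply: eq_bigr => i _; rewrite mxE mulrCA. Qed.

Lemma dotDl u v w : dot (v + w) u = dot v u + dot w u.
Proof. by rewrite dotC dotDr !(dotC u). Qed.

Lemma dotZl a u v : dot (a *: v) u = a * dot v u.
Proof. by rewrite dotC dotZr dotC. Qed.

Lemma dotNr u v : dot u (- v) = - dot u v.
Proof. by rewrite -scaleN1r dotZr mulN1r. Qed.

Lemma dotBr u v w : dot u (v - w) = dot u v - dot u w.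
Proof. by rewrite dotDr dotNr. Qed.

Lemma dotBl u v w : dot (v - w) u = dot v u - dot w u.
Proof. by rewrite dotC dotBr !(dotC u). Qed.

Lemma dot0r u : dot u 0 = 0.
Proof. by rewrite /dot mulmx0 mxE. Qed.

Lemma dot0l u : dot 0 u = 0.
Proof. by rewrite dotC dot0r. Qed.

Lemma dot_submx_ker k (W : 'M[R]_(k, n)) z x :
  (z^T <= W)%MS -> W *m x = 0 -> dot z x = 0.
Proof. by move=> /submxP [D zW] Wx; rewrite /dot zW -mulmxA Wx mulmx0 mxE. Qed.

Lemma mx11_eq0 (M : 'M[R]_1) : M = 0 <-> M 0 0 = 0.
Proof.
split=> [->|M0]; first by rewrite mxE.
by apply/matrixP => i j; rewrite !ord1 M0 mxE.
Qed.

Lemma sqn_ge0 v : 0 <= sqn v.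
Proof. by rewrite sqnE dotE; apply: sumr_ge0 => i _; rewrite -expr2 sqr_ge0. Qed.

Lemma sqn_eq0 v : sqn v = 0 -> v = 0.
Proof.
rewrite sqnE dotE => /eqP; rewrite psumr_eq0 => [/allP v0|i _]; last first.
  by rewrite -expr2 sqr_ge0.
apply/matrixP => i j; rewrite ord1 mxE; apply/eqP.
by rewrite -sqrf_eq0 expr2; apply: v0; rewrite mem_index_enum.
Qed.

Lemma sqn_gt0 v : v != 0 -> 0 < sqn v.
Proof.
by move=> v0; rewrite lt_neqAle sqn_ge0 andbT eq_sym; apply: contra v0 => /eqP/sqn_eq0->.
Qed.

Lemma sqnZ a v : sqn (a *: v) = a ^+ 2 * sqn v.
Proof. by rewrite !sqnE dotZr dotZl mulrA expr2. Qed.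

Lemma sqnB u v : sqn (u - v) = sqn u - 2 * dot u v + sqn v.
Proof. by rewrite !sqnE dotBl !dotBr (dotC v u); ring. Qed.

Lemma sqnD_orth u v : dot u v = 0 -> sqn (u + v) = sqn u + sqn v.
Proof. by move=> uv; rewrite !sqnE dotDl !dotDr (dotC v u) uv addr0 add0r. Qed.

Lemma dot_sqr_le u v : dot u v ^+ 2 <= sqn u * sqn v.
Proof.
have [->|u0] := eqVneq u 0; first by rewrite dot0l sqnE dot0l expr2 !mul0r.
have := sqn_ge0 (sqn u *: v - dot u v *: u).
rewrite sqnB !sqnZ dotZl dotZr (dotC v u) => h.
have : 0 <= sqn u * (sqn u * sqn v - dot u v ^+ 2) by nra.
by rewrite pmulr_rge0 ?sqn_gt0 // subr_ge0.
Qed.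

Definition nvec v := (nrm v)^-1 *: v.

Lemma sqr_nrm v : nrm v ^+ 2 = sqn v.
Proof. by rewrite sqr_sqrtr // sqn_ge0. Qed.

Lemma nrm_gt0 v : v != 0 -> 0 < nrm v.
Proof. by move=> v0; rewrite sqrtr_gt0 sqn_gt0. Qed.

Lemma tr_submxD m (W : 'M[R]_(m, n)) x y :
  (x^T <= W)%MS -> (y^T <= W)%MS -> ((x + y)^T <= W)%MS.
Proof. by move=> hx hy; rewrite linearD addmx_sub. Qed.

Lemma tr_submxZ m (W : 'M[R]_(m, n)) a x :
  (x^T <= W)%MS -> ((a *: x)^T <= W)%MS.
Proof. by move=> hx; rewrite linearZ scalemx_sub. Qed.

Lemma tr_submxB m (W : 'M[R]_(m, n)) x y :
  (x^T <= W)%MS -> (y^T <= W)%MS -> ((x - y)^T <= W)%MS.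
Proof. by move=> hx hy; rewrite -scaleN1r tr_submxD ?tr_submxZ. Qed.

Lemma orth_decomp k (W : 'M[R]_(k, n)) v :
  exists2 p, (p^T <= W)%MS & W *m (v - p) = 0.
Proof.
set K := kermx W^T.
have WK0 : (W :&: K)%MS = 0.
  apply/eqP; rewrite -submx0; apply/rV_subP => r.
  rewrite sub_capmx => /andP[/submxP[a ->] /sub_kermxP aWWT].
  have : sqn (a *m W)^T = 0 by rewrite /sqn trmxK trmx_mul mulmxA aWWT mul0mx mxE.
  by move/sqn_eq0/(congr1 trmx); rewrite trmxK trmx0 => ->; rewrite sub0mx.
have WKfull : row_full (W + K)%MS.
  by rewrite /row_full mxrank_disjoint_sum // mxrank_ker mxrank_tr subnKC ?rank_leq_col.
have /sub_addsmxP [[a1 a2] /= va] := submx_full v^T WKfull.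
exists (a1 *m W)^T; first by rewrite trmxK submxMl.
apply: (can_inj trmxK); rewrite trmx0 trmx_mul linearB /= trmxK va addrC addKr.
by apply/sub_kermxP; rewrite submxMl.
Qed.

Lemma sqn_le_orth m (S : 'M[R]_(m, n)) p b :
  (p^T <= S)%MS -> S *m b = 0 -> sqn b <= sqn (p + b).
Proof. by move=> pS Sb; rewrite sqnD_orth ?lerDr ?sqn_ge0 ?(dot_submx_ker pS Sb). Qed.

(* A vector orthogonal to [u = p + b] keeps at least the fraction [|b|^2 / |u|^2]
   of its squared norm in [S]. *)
Lemma sqn_proj_ge_of_orth m (S : 'M[R]_(m, n)) p b y c :
  (p^T <= S)%MS -> S *m b = 0 -> (y^T <= S)%MS -> dot (p + b) (y + c *: b) = 0 ->
  sqn b * sqn (y + c *: b) <= sqn (p + b) * sqn y.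
Proof.
move=> pS Sb yS uy.
have pb := dot_submx_ker pS Sb; have yb := dot_submx_ker yS Sb.
have py : dot p y = - (c * sqn b).
  by move: uy; rewrite dotDl !dotDr !dotZr pb (dotC b y) yb -sqnE; lra.
have := dot_sqr_le p y; rewrite py.
rewrite !sqnD_orth ?sqnZ ?dotZr ?yb ?mulr0 //.
by have := sqn_ge0 b; nra.
Qed.

End Euclid.

Section Subspaces.
Variables (R : realType) (n : nat).

Lemma subspace_ofP (Q : 'cV[R]_n -> Prop) :
  (exists M : 'M[R]_n, forall v, (v^T <= M)%MS <-> Q v) ->
  forall v, (v^T <= subspace_of Q)%MS <-> Q v.
Proof. exact: xgetPex. Qed.

Lemma orthcP (W : 'M[R]_n) v :
  (v^T <= orthc W)%MS <-> (forall z, (z^T <= W)%MS -> dot z v = 0).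
Proof.
rewrite /orthc subspace_ofP; first by split=> vW z /vW /mx11_eq0.
exists (kermx W^T) => y; split.
  move=> /sub_kermxP yW z zW; apply/mx11_eq0; apply: dot_submx_ker zW _.
  by apply: (can_inj trmxK); rewrite trmx_mul yW trmx0.
move=> yW; apply/sub_kermxP/matrixP => i j; rewrite ord1 [RHS]mxE.
have rW : ((row j W)^T^T <= W)%MS by rewrite trmxK row_sub.
have /mx11_eq0 <- := yW _ rW.
by rewrite !mxE; apply: eq_bigr => k _; rewrite !mxE mulrC.
Qed.

Lemma oprojP (W : 'M[R]_n) r :
  ((oproj W r)^T <= W)%MS /\ forall z, (z^T <= W)%MS -> dot z (r - oproj W r) = 0.
Proof.
have [p pW Wrp] := orth_decomp W r.
have [|qW rqW] := @xgetPex _ 0 (fun p : 'cV[R]_n => (p^T <= W)%MS /\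
  forall z : 'cV[R]_n, (z^T <= W)%MS -> z^T *m (r - p) = 0).
  by exists p; split=> // z zW; apply/mx11_eq0; exact: dot_submx_ker zW Wrp.
by split=> // z /rqW /mx11_eq0.
Qed.

Lemma oproj_uniq (W : 'M[R]_n) r p :
  (p^T <= W)%MS -> (forall z, (z^T <= W)%MS -> dot z (r - p) = 0) -> oproj W r = p.
Proof.
move=> pW rpW; have [qW rqW] := oprojP W r; set q := oproj W r in qW rqW *.
have dW := tr_submxB qW pW.
apply/eqP; rewrite -subr_eq0; apply/eqP/sqn_eq0.
have qpE : q - p = (r - p) - (r - q) by rewrite opprB [RHS]addrC [RHS]addrA subrK.
by rewrite sqnE {2}qpE dotBr rpW ?rqW // subrr.
Qed.

End Subspaces.

Section KaczmarzStep.
Variables (R : realType) (n : nat).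
Implicit Types (u x y : 'cV[R]_n) (us : nat -> 'cV[R]_n).

Definition step u x := x - (dot u x / sqn u) *: u.

Lemma step_orth u x : u != 0 -> dot u (step u x) = 0.
Proof. by move=> u0; rewrite dotBr dotZr -sqnE mulfVK ?subrr // gt_eqF ?sqn_gt0. Qed.

Lemma sqn_step_le u x : u != 0 -> sqn (step u x) <= sqn x.
Proof.
move=> u0; have su0 := sqn_gt0 u0.
have -> : sqn (step u x) = sqn x - dot u x ^+ 2 / sqn u.
  by rewrite sqnB sqnZ dotZr (dotC x u); field; rewrite gt_eqF.
by rewrite lerBlDr lerDl divr_ge0 ?sqr_ge0 ?sqn_ge0.
Qed.

Lemma stepD u x y : step u (x + y) = step u x + step u y.
Proof. by rewrite /step dotDr mulrDl scalerDl opprD addrACA. Qed.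

Lemma stepB u x y : step u (x - y) = step u x - step u y.
Proof. by apply/eqP; rewrite eq_sym subr_eq -stepD subrK. Qed.

Lemma step_id u x : dot u x = 0 -> step u x = x.
Proof. by move=> ux; rewrite /step ux mul0r scale0r subr0. Qed.

Lemma step_sub m (W : 'M[R]_(m, n)) u x :
  (u^T <= W)%MS -> (x^T <= W)%MS -> ((step u x)^T <= W)%MS.
Proof. by move=> uW xW; rewrite tr_submxB ?tr_submxZ. Qed.

Fixpoint run us i k x : 'cV[R]_n :=
  if k is k'.+1 then run us i.+1 k' (step (us i) x) else x.

Lemma runS us i k x : run us i k.+1 x = step (us (i + k)%N) (run us i k x).
Proof.
elim: k i x => [|k IH] i x; first by rewrite addn0.
by rewrite -addSnnS; exact: IH.
Qed.

Lemma runD us i k x y : run us i k (x + y) = run us i k x + run us i k y.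
Proof. by elim: k i x y => //= k IH i x y; rewrite stepD IH. Qed.

Lemma run_id us i k x : (forall j, (i <= j < i + k)%N -> dot (us j) x = 0) ->
  run us i k x = x.
Proof.
elim: k i x => //= k IH i x ux; rewrite step_id ?ux ?leqnn ?addnS ?ltnS ?leq_addr //.
by apply: IH => j /andP[ij jk]; rewrite ux // addnS -addSn jk ltnW.
Qed.

Lemma run_sub m (W : 'M[R]_(m, n)) us i k x :
  (forall j, (i <= j < i + k)%N -> ((us j)^T <= W)%MS) ->
  (x^T <= W)%MS -> ((run us i k x)^T <= W)%MS.
Proof.
elim: k i x => //= k IH i x uW xW; apply: IH.
  by move=> j /andP[ij jk]; rewrite uW // addnS -addSn jk ltnW.
by rewrite step_sub ?uW ?leqnn ?addnS ?ltnS ?leq_addr.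
Qed.

Lemma sqn_run_le us i k x : (forall j, us j != 0) -> sqn (run us i k x) <= sqn x.
Proof.
move=> us0; elim: k i x => //= k IH i x.
exact: le_trans (IH _ _) (sqn_step_le _ (us0 i)).
Qed.

End KaczmarzStep.

Section GramDet.
Variables (R : realType) (n : nat).

Lemma det_gram_row_mx m (f b : 'cV[R]_n) (G : 'M[R]_(n, m)) (c : 'cV[R]_m) :
  f = G *m c + b -> G^T *m b = 0 ->
  \det ((row_mx f G)^T *m row_mx f G) = sqn b * \det (G^T *m G).
Proof.
move=> fE Gb.
pose M : 'M[R]_(1 + m) := block_mx 1%:M 0 c 1%:M.
have fGE : row_mx f G = row_mx b G *m M.
  by rewrite mul_row_block !mulmx1 !mulmx0 add0r fE addrC.
have detM : \det M = 1 by rewrite det_lblock !det1 mulr1.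
have bG : b^T *m G = 0 by apply: (can_inj trmxK); rewrite trmx_mul trmxK Gb trmx0.
rewrite fGE trmx_mul -mulmxA !det_mulmx det_tr detM mul1r mulmxA det_mulmx detM.
by rewrite mulr1 tr_row_mx mul_col_row Gb bG det_ublock det_mx11.
Qed.

Lemma row_free_gram m (F : 'M[R]_(n, m)) : \det (F^T *m F) != 0 -> row_free F^T.
Proof.
move=> detF; have FFu : F^T *m F \in unitmx by rewrite unitmxE unitfE.
by rewrite /row_free eqn_leq rank_leq_row -{1}(mxrank_unit FFu) mxrankM_maxl.
Qed.

Lemma det_gram_gt0 m (F : 'M[R]_(n, m)) : row_free F^T -> 0 < \det (F^T *m F).
Proof.
elim: m F => [|m IH] F; first by rewrite det_mx00 ltr01.
rewrite -[F](@hsubmxK _ _ 1 m); set f := lsubmx _; set G := rsubmx _.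
move=> rF; have rkF : \rank (f^T + G^T)%MS = m.+1.
  by move/eqP: rF; rewrite (tr_row_mx f G) -(addsmxE f^T G^T).
have rkG : row_free G^T.
  rewrite /row_free eqn_leq rank_leq_row -ltnS -[(\rank G^T).+1]add1n -rkF.
  by rewrite (leq_trans (mxrank_adds_leqif _ _)) // leq_add2r rank_leq_row.
have [p pG Gfp] := orth_decomp G^T f.
have [c pE] : exists c, p = G *m c.
  by case/submxP: pG => D pD; exists D^T; rewrite -(trmxK p) pD trmx_mul trmxK.
have fp0 : f - p != 0.
  apply/eqP => /subr0_eq fp; move: rkF.
  by rewrite (addsmx_idPr _) ?fp // (eqP rkG); lia.
rewrite (det_gram_row_mx (f := f) (G := G) (c := c) (b := f - p)) ?mulr_gt0 ?sqn_gt0 ?IH //.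
by rewrite -pE addrC subrK.
Qed.

End GramDet.

Section Meany.
Variables (R : realType) (n : nat) (us : nat -> 'cV[R]_n).
Hypothesis us_neq0 : forall j, us j != 0.

Definition spanU i k : 'M[R]_n := (\sum_(i <= j < i + k) <<(us j)^T>>)%MS.

Lemma spanU0 i : spanU i 0 = 0.
Proof. by rewrite /spanU big_geq // addn0. Qed.

Lemma spanU_rec i k : (spanU i k.+1 :=: (us i)^T + spanU i.+1 k)%MS.
Proof.
rewrite /spanU big_ltn ?addnS ?ltnS ?leq_addr // -addSn.
by apply: adds_eqmx => //; exact: genmxE.
Qed.

Lemma spanU_sup i k j : (i <= j < i + k)%N -> ((us j)^T <= spanU i k)%MS.
Proof.
move=> jik; rewrite /spanU (bigD1_seq j) ?mem_index_iota ?iota_uniq //=.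
by apply: submx_trans (addsmxSl _ _); rewrite genmxE.
Qed.

(* The last clause is Meany's inequality; the columns of [F] are independent
   since their Gram determinant is positive. *)
Definition meany_frame i k m (F : 'M[R]_(n, m)) : Prop :=
  [/\ forall c, exists2 j, (i <= j < i + k)%N & col c F = nvec (us j),
      (F^T == spanU i k)%MS, 0 < \det (F^T *m F) <= 1 &
      forall x, (x^T <= spanU i k)%MS ->
        sqn (run us i k x) <= (1 - \det (F^T *m F)) * sqn x].

Lemma meany_frame0 i : meany_frame i 0 (0 : 'M[R]_(n, 0)).
Proof.
split; first by case.
- by rewrite spanU0 trmx0 !sub0mx.
- by rewrite det_mx00 ltr01 lexx.
move=> x; rewrite spanU0 submx0 => /eqP x0.
by rewrite -[x]trmxK x0 trmx0 /= sqnE dot0r mulr0.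
Qed.

Lemma meany_frame_redundant i k m (F : 'M[R]_(n, m)) :
  ((us i)^T <= spanU i.+1 k)%MS -> meany_frame i.+1 k F -> meany_frame i k.+1 F.
Proof.
move=> ui [colF FS detF contrF].
have SE : (spanU i k.+1 :=: spanU i.+1 k)%MS.
  by apply: eqmx_trans (spanU_rec i k) _; apply/addsmx_idPr.
split=> //.
- move=> c; have [j /andP[ij jk] ->] := colF c; exists j => //.
  by rewrite ltnW //= addnS -addSn.
- by rewrite !SE.
move=> x; rewrite SE => xS /=.
have yS : ((step (us i) x)^T <= spanU i.+1 k)%MS.
  by rewrite step_sub // -SE spanU_rec addsmxSl.
apply: le_trans (contrF _ yS) _; apply: ler_wpM2l; last exact: sqn_step_le.
by rewrite subr_ge0; case/andP: detF.
Qed.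

Lemma run_contract_cons i k p b d :
  (p^T <= spanU i.+1 k)%MS -> spanU i.+1 k *m b = 0 -> us i = p + b ->
  0 <= d <= 1 ->
  (forall y, (y^T <= spanU i.+1 k)%MS -> sqn (run us i.+1 k y) <= (1 - d) * sqn y) ->
  forall x, (x^T <= spanU i k.+1)%MS ->
    sqn (run us i k.+1 x) <= (1 - sqn b / sqn (us i) * d) * sqn x.
Proof.
set S := spanU i.+1 k => pS Sb uE /andP[d0 d1] contrS x xS /=.
set y := step (us i) x.
have uy : dot (us i) y = 0 := step_orth x (us_neq0 i).
have yx : sqn y <= sqn x := sqn_step_le x (us_neq0 i).
have [y' [c [y'S yE]]] : exists y' c, (y'^T <= S)%MS /\ y = y' + c *: b.
  have : (y^T <= spanU i k.+1)%MS by rewrite step_sub // spanU_rec addsmxSl.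
  rewrite spanU_rec => /sub_addsmxP [[D1 D2] /= yD].
  set c := D1 0 0; exists ((D2 *m S)^T + c *: p), c; split.
    by rewrite tr_submxD ?tr_submxZ ?trmxK ?submxMl.
  apply: (can_inj trmxK); rewrite yD (mx11_scalar D1) mul_scalar_mx -/c uE.
  by rewrite !linearD !linearZ /= trmxK [LHS]addrC addrA.
have runb : run us i.+1 k (c *: b) = c *: b.
  by apply: run_id => j /spanU_sup uS; rewrite dotZr (dot_submx_ker uS Sb) mulr0.
have runy : sqn (run us i.+1 k y) = sqn (run us i.+1 k y') + c ^+ 2 * sqn b.
  rewrite yE runD runb sqnD_orth ?sqnZ // dotZr (dot_submx_ker _ Sb) ?mulr0 //.
  exact: run_sub (@spanU_sup _ _) y'S.
have sqny : sqn y = sqn y' + c ^+ 2 * sqn b.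
  by rewrite yE sqnD_orth ?sqnZ // dotZr (dot_submx_ker y'S Sb) mulr0.
have y'_large : sqn b / sqn (us i) * sqn y <= sqn y'.
  rewrite mulrAC ler_pdivrMr ?sqn_gt0 // [sqn y' * _]mulrC uE yE.
  by apply: (sqn_proj_ge_of_orth pS Sb y'S); rewrite -uE -yE.
have s01 : 0 <= sqn b / sqn (us i) <= 1.
  by rewrite divr_ge0 ?sqn_ge0 //= ler_pdivrMr ?sqn_gt0 // mul1r uE (sqn_le_orth pS Sb).
move: y'_large s01; set s := _ / _ => y'_large /andP[s0 s1].
have := contrS _ y'S; have := sqn_ge0 y'.
have h1 : 0 <= (1 - s * d) * (sqn x - sqn y).
  by rewrite mulr_ge0 // subr_ge0 // mulr_ile1.
have h2 : 0 <= d * (sqn y' - s * sqn y) by rewrite mulr_ge0 // subr_ge0.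
rewrite runy; nra.
Qed.

Lemma meany_frame_cons i k m (F : 'M[R]_(n, m)) :
  ~~ ((us i)^T <= spanU i.+1 k)%MS -> meany_frame i.+1 k F ->
  meany_frame i k.+1 (row_mx (nvec (us i)) F).
Proof.
set S := spanU i.+1 k => uS [colF FS detF contrF].
have [p pS Sup] := orth_decomp S (us i).
have [b Sb uE] : exists2 b, S *m b = 0 & us i = p + b.
  by exists (us i - p); rewrite // addrC subrK.
have b0 : b != 0 by apply: contraNneq uS => b0; rewrite uE b0 addr0.
have nu0 := nrm_gt0 (us_neq0 i).
have [D pD] : exists D, p^T = D *m F^T by apply/submxP; rewrite (eqmxP FS).
have [E FE] : exists E, F^T = E *m S by apply/submxP; rewrite (eqmxP FS).
have detE : \det ((row_mx (nvec (us i)) F)^T *m row_mx (nvec (us i)) F) =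
            sqn b / sqn (us i) * \det (F^T *m F).
  rewrite (det_gram_row_mx (c := (nrm (us i))^-1 *: D^T) (b := (nrm (us i))^-1 *: b)).
  - by rewrite sqnZ exprVn sqr_nrm [_^-1 * _]mulrC.
  - have FDp : F *m D^T = p by rewrite -[p]trmxK pD trmx_mul trmxK.
    by rewrite -scalemxAr -scalerDr FDp -uE.
  - by rewrite -scalemxAr FE -mulmxA Sb mulmx0 scaler0.
have s01 : 0 < sqn b / sqn (us i) <= 1.
  by rewrite divr_gt0 ?sqn_gt0 //= ler_pdivrMr ?sqn_gt0 // mul1r uE (sqn_le_orth pS Sb).
split.
- move=> c; rewrite -(splitK c); case: (split c) => [c1|c1] /=.
    by exists i; rewrite ?colKl ?col_id ?leqnn ?addnS ?ltnS ?leq_addr.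
  rewrite colKr; have [j /andP[ij jk] ->] := colF c1; exists j => //.
  by rewrite ltnW //= addnS -addSn.
- apply/eqmxP; rewrite (tr_row_mx (nvec (us i)) F).
  apply: eqmx_trans (eqmx_sym (addsmxE _ _)) (eqmx_trans _ (eqmx_sym (spanU_rec i k))).
  apply: adds_eqmx; last exact/eqmxP.
  by rewrite linearZ /=; apply: eqmx_scale; rewrite invr_eq0 lt0r_neq0.
- case/andP: s01 => s0 s1; case/andP: detF => d0 d1.
  by rewrite detE mulr_gt0 //=; apply: mulr_ile1 => //; apply: ltW.
- rewrite detE; apply: (run_contract_cons pS Sb uE) => //.
  by case/andP: detF => d0 ->; rewrite andbT ltW.
Qed.

Lemma meany k i : exists m (F : 'M[R]_(n, m)), meany_frame i k F.
Proof.
elim: k i => [|k IH] i; first by exists 0%N, 0; exact: meany_frame0.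
have [m [F hF]] := IH i.+1.
have [ui|ui] := boolP ((us i)^T <= spanU i.+1 k)%MS.
  by exists m, F; exact: meany_frame_redundant.
by exists (1 + m)%N, (row_mx (nvec (us i)) F); exact: meany_frame_cons.
Qed.

End Meany.

Section GramLowerBound.
Variables (R : realType) (n : nat).

Lemma fin_pos_lb (X : finType) (P : pred X) (h : X -> R) :
  (forall x, P x -> 0 < h x) -> exists2 c, 0 < c & forall x, P x -> c <= h x.
Proof.
move=> hpos; have [x0 Px0|P0] := pickP P; last by exists 1 => // x; rewrite P0.
by case: (arg_minP h Px0) => x Px xmin; exists (h x); [exact: hpos | exact: xmin].
Qed.

(* Only finitely many matrices have their columns in [V 0, ..., V e] and
   independent columns, since there are at most [n] of them. *)
Lemma gram_det_lb (V : nat -> 'cV[R]_n) e :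
  exists2 c, 0 < c & forall m (F : 'M[R]_(n, m)), row_free F^T ->
    (forall j, exists2 i, (i <= e)%N & col j F = V i) -> c <= \det (F^T *m F).
Proof.
pose mkF m (g : {ffun 'I_m -> 'I_e.+1}) : 'M[R]_(n, m) := \matrix_(a, j) V (g j) a 0.
pose G (x : {m : 'I_n.+1 & {ffun 'I_m -> 'I_e.+1}}) := mkF _ (tagged x).
have [c c0 cG] := fin_pos_lb (P := fun x => row_free (G x)^T)
  (h := fun x => \det ((G x)^T *m G x)) (fun x => @det_gram_gt0 _ _ _ _).
exists c => // m F rF colF.
have mn : (m < n.+1)%N by move: rF => /eqP <-; rewrite ltnS rank_leq_col.
pose g := [ffun j => odflt ord0 [pick i : 'I_e.+1 | col j F == V i]].
have FE : F = mkF m g.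
  apply/matrixP => a j; rewrite mxE ffunE; case: pickP => [i /eqP <-|noV].
    by rewrite mxE.
  by have [i ie Fj] := colF j; have := noV (Ordinal (ie : (i < e.+1)%N)); rewrite Fj eqxx.
by rewrite FE in rF *; exact: (cG (Tagged _ (g : {ffun 'I_(Ordinal mn) -> _}))).
Qed.

End GramLowerBound.

Lemma first_minP (q : pred nat) k : first_min q = Some k -> q k.
Proof. by rewrite /first_min; case: pselect => // qk [<-]; case: ex_minnP. Qed.

Section Outcome.
Variables (R : realType) (dT : measure_display) (T : measurableType dT)
  (P : probability T R) (n d : nat) (A : 'M[R]_(n, d)) (b : 'cV[R]_n)
  (w : T -> 'cV[R]_d) (ws : nat -> T -> 'cV[R]_d) (x0 : 'cV[R]_d) (om : T).
Hypothesis us_in_C : forall l, ((A *m ws l om)^T <= Cmx P A w)%MS.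
Hypothesis us_neq0 : forall l, A *m ws l om != 0.

Let us j := A *m ws j om.
Let r := res A b ws x0 om.
Let p := oproj (Lmx P A w) (r 0).

Lemma res_succ k : r k.+1 = step (us k) (r k).
Proof.
rewrite /r /res /step /= /us; set x := xit A b ws x0 om k; set wk := ws k om.
have Awk : A *m (wk *m wk^T *m A^T *m (b - A *m x)) =
    dot (A *m wk) (b - A *m x) *: (A *m wk).
  rewrite !mulmxA -(mulmxA (A *m wk)) -trmx_mul -(mulmxA (A *m wk)).
  by rewrite (mx11_scalar ((A *m wk)^T *m (b - A *m x))) mul_mx_scalar.
rewrite mulmxDr -scalemxAr Awk scalerA -[b - A *m x]opprB dotNr mulrN scaleNr.
by rewrite [_^-1 * _]mulrC addrAC.
Qed.

Lemma us_orth_projL j : dot (us j) p = 0.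
Proof.
have /orthcP usL := us_in_C j.
by rewrite dotC usL //; case: (oprojP (Lmx P A w) (r 0)).
Qed.

Lemma res0_projL_in_C : ((r 0 - p)^T <= Cmx P A w)%MS.
Proof. by apply/orthcP => z zL; case: (oprojP (Lmx P A w) (r 0)) => _; apply. Qed.

Lemma projC_res0 : oproj (Cmx P A w) (r 0) = r 0 - p.
Proof.
apply: oproj_uniq res0_projL_in_C _ => z /orthcP zC.
by rewrite opprB addrC subrK dotC zC //; case: (oprojP (Lmx P A w) (r 0)).
Qed.

Lemma res_projL_run i k : r (i + k) - p = run us i k (r i - p).
Proof.
elim: k => [|k IH]; first by rewrite addn0.
by rewrite runS -IH addnS res_succ stepB (step_id (us_orth_projL _)).
Qed.

Lemma res_projL_in_C k : ((r k - p)^T <= Cmx P A w)%MS.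
Proof.
by rewrite -[k]add0n res_projL_run; apply: run_sub res0_projL_in_C => j _; exact: us_in_C.
Qed.

Definition err k := sqn (r k - p).

Lemma err_addn_le i k : err (i + k) <= err i.
Proof. by rewrite /err res_projL_run; apply: sqn_run_le. Qed.

Lemma err_block s e : (s <= e)%N -> spanEq P A w ws om s e ->
  exists m (F : 'M[R]_(n, m)), [/\ isF A ws om s e F, 0 < \det (F^T *m F) <= 1 &
     err e.+1 <= (1 - \det (F^T *m F)) * err s].
Proof.
move=> se /eqmxP spanC.
have [m [F [colF FS detF contrF]]] := meany us_neq0 (e.+1 - s) s.
have seE : (s + (e.+1 - s) = e.+1)%N by rewrite subnKC // ltnW.
have spanE : spanU us s (e.+1 - s) = spanmx A ws om s e by rewrite /spanU seE.
rewrite spanE seE in FS contrF colF.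
have rF : row_free F^T by apply: row_free_gram; case/andP: detF => d0 _; rewrite gt_eqF.
exists m, F; split => //; last first.
  by rewrite /err -seE res_projL_run contrF // spanC res_projL_in_C.
split => // [j|u [i [sie ->]]].
  by have [i sie ->] := colF j; exists i; rewrite -ltnS.
right; have uF : ((nvec (us i))^T <= F^T)%MS.
  by rewrite (eqmxP FS) tr_submxZ // -spanE spanU_sup // seE.
by rewrite /row_free -(addsmxE F^T (nvec (us i))^T) (addsmx_idPl uF) (eqP rF) addn1 ltn_eqF.
Qed.

Let block_start l t := if l == 1%N then 0%N else t.+1.

Lemma tauSS l : tau P A w ws om l.+2 =
  if tau P A w ws om l.+1 is Some t
  then first_min (fun k => (t < k)%N && spanEq P A w ws om t.+1 k) else None.
Proof. by []. Qed.

Lemma tau_block l e : (0 < l)%N -> tau P A w ws om l = Some e ->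
  exists2 t, tau P A w ws om l.-1 = Some t &
    (block_start l t <= e)%N && spanEq P A w ws om (block_start l t) e.
Proof.
case: l => [|[|l]] // _ tau_e.
  by have /= spanC := first_minP tau_e; exists 0%N => //=; rewrite spanC.
move: tau_e; rewrite tauSS; case tau_t: (tau P A w ws om l.+1) => [t|] // /first_minP.
by case/andP => te spanC; exists t => //=; rewrite te spanC.
Qed.

Lemma gamma_block l e : (0 < l)%N -> tau P A w ws om l = Some e ->
  exists2 t, tau P A w ws om l.-1 = Some t &
    [/\ 0 <= gamma P A w ws om l, gamma P A w ws om l < 1 &
        err e.+1 <= gamma P A w ws om l * err (block_start l t)].
Proof.
move=> l0 tau_e; have [t tau_t /andP[se spanC]] := tau_block l0 tau_e.
exists t => //; set s := block_start l t in se spanC *.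
have -> : gamma P A w ws om l = 1 - inf (detset A ws om s e) by rewrite /gamma tau_e tau_t.
have [m [F [FF /andP[d0 d1] errF]]] := err_block se spanC.
have [c c0 cF] := gram_det_lb (fun i => nvec (us i)) e.
have c_lb : lbound (detset A ws om s e) c.
  move=> _ [m' [F' [[colF' rF' _] ->]]]; apply: cF => // j.
  by have [i [/andP[_ ie] ->]] := colF' j; exists i.
have FD : detset A ws om s e (\det (F^T *m F)) by exists m, F.
have c_inf : c <= inf (detset A ws om s e).
  by apply: lb_le_inf => //; exists (\det (F^T *m F)).
have inf_F : inf (detset A ws om s e) <= \det (F^T *m F) by apply: ge_inf => //; exists c.
split.
- by rewrite subr_ge0 (le_trans inf_F).
- by rewrite ltrBlDr ltrDl (lt_le_trans c0).
- by apply: le_trans errF _; rewrite ler_wpM2r ?lerB ?sqn_ge0.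
Qed.

Lemma err_tau_le l e : tau P A w ws om l = Some e ->
  err e.+1 <= (\prod_(1 <= j < l.+1) gamma P A w ws om j) * err 0.
Proof.
elim: l e => [|l IH] e; first by move=> [<-]; rewrite big_geq // mul1r (err_addn_le 0 1).
move=> tau_e; have [t tau_t [g0 _ errg]] := gamma_block (ltn0Sn l) tau_e.
have err_t : err (block_start l.+1 t) <=
    (\prod_(1 <= j < l.+1) gamma P A w ws om j) * err 0.
  case: l IH tau_t {tau_e g0 errg} => [|l] IH tau_t; last exact: IH.
  by rewrite /= big_geq // mul1r.
rewrite big_nat_recr //= [_ * gamma _ _ _ _ _ _]mulrC -mulrA.
exact: le_trans errg (ler_wpM2l g0 err_t).
Qed.

Lemma tau_Lk_lt k : (0 < k)%N ->
  exists2 t, tau P A w ws om (Lk P A w ws om k) = Some t & (t < k)%N.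
Proof.
move=> k0; pose Q (l : 'I_k.+1) := if tau P A w ws om l is Some t then (t < k)%N else false.
have [l Ql lmax] : {l | Q l & Lk P A w ws om k = l}.
  by apply: eq_bigmax_cond; apply/card_gt0P; exists ord0.
by rewrite lmax; move: Ql; rewrite /Q; case: (tau _ _ _ _ _ l) => // t; exists t.
Qed.

Lemma err_Lk_le k :
  err k <= (\prod_(1 <= j < (Lk P A w ws om k).+1) gamma P A w ws om j) * err 0.
Proof.
case: k => [|k].
  have -> : Lk P A w ws om 0 = 0%N by rewrite /Lk big_pred0 // => l; rewrite ord1.
  by rewrite big_geq // mul1r.
have [t tau_t tk] := tau_Lk_lt (ltn0Sn k); apply: le_trans (err_tau_le tau_t).
by rewrite -(subnKC tk) err_addn_le.
Qed.

Lemma kaczmarz_outcome :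
  (forall l e, (0 < l)%N -> tau P A w ws om l = Some e ->
      0 <= gamma P A w ws om l < 1) /\
  (forall l e, tau P A w ws om l = Some e ->
      sqn (r e.+1 - p) <= (\prod_(1 <= j < l.+1) gamma P A w ws om j)
                          * sqn (oproj (Cmx P A w) (r 0))) /\
  (forall k, sqn (r k - p) <= (\prod_(1 <= j < (Lk P A w ws om k).+1) gamma P A w ws om j)
                              * sqn (oproj (Cmx P A w) (r 0))).
Proof.
rewrite projC_res0; split; last by split=> [l e|k]; [exact: err_tau_le | exact: err_Lk_le].
by move=> l e l0 tau_e; have [t _ [-> ->]] := gamma_block l0 tau_e.
Qed.

End Outcome.

Lemma tr_submxE (F : fieldType) n (v : 'cV[F]_n) (C : 'M[F]_n) :
  (v^T <= C)%MS = ((cokermx C)^T *m v == 0).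
Proof. by rewrite submxE -trmx_eq0 trmx_mul trmxK. Qed.

Section MeasurableMatrices.
Variables (R : realType) (dT : measure_display) (T : measurableType dT).
Variables (d : nat) (f : T -> 'cV[R]_d).
Hypothesis mf : forall i, measurable_fun setT (fun om => f om i 0).

Lemma measurable_mulmx_eq0 k (M : 'M[R]_(k, d)) : measurable [set om | M *m f om = 0].
Proof.
have mMf i : measurable_fun setT (fun om => (M *m f om) i 0).
  under eq_fun do rewrite mxE.
  by apply: measurable_sum => j; apply: measurable_funM => //; exact: measurable_cst.
have msqn : measurable_fun setT (fun om => sqn (M *m f om)).
  rewrite /sqn; under eq_fun do rewrite mxE.
  by apply: measurable_sum => i; under eq_fun do rewrite mxE; exact: measurable_funM.
have -> : [set om | M *m f om = 0] = (fun om => sqn (M *m f om)) @^-1` [set 0].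
  apply/seteqP; split=> om /=; last exact: sqn_eq0.
  by move=> ->; rewrite sqnE dot0r.
by rewrite -[X in measurable X]setTI; apply: msqn => //; exact: measurable_set1.
Qed.

Lemma measurable_mulmx_neq0 k (M : 'M[R]_(k, d)) : measurable [set om | M *m f om != 0].
Proof.
rewrite (_ : mkset _ = ~` [set om | M *m f om = 0]).
  exact/measurableC/measurable_mulmx_eq0.
by apply/seteqP; split=> om /= /eqP.
Qed.

Lemma measurable_tr_submx k (M : 'M[R]_(k, d)) (C : 'M[R]_k) :
  measurable [set om | ((M *m f om)^T <= C)%MS].
Proof.
rewrite (_ : mkset _ = [set om | ((cokermx C)^T *m M) *m f om = 0]).
  by apply: measurable_mulmx_eq0.
by apply/seteqP; split=> om /=; rewrite tr_submxE mulmxA; [move/eqP | move=> ->].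
Qed.

End MeasurableMatrices.

Lemma ae_of_prob1 (R : realType) (dT : measure_display) (T : measurableType dT)
    (P : probability T R) (S : set T) :
  measurable S -> P S = 1%E -> {ae P, forall om, S om}.
Proof.
move=> mS PS; apply/negligibleP; first exact: measurableC.
by apply: etrans (probability_setC P mS) _; rewrite PS subee.
Qed.

Unset Implicit Arguments.

Theorem mainTheorem12 (R : realType) (dT : measure_display) (T : measurableType dT)
  (P : probability T R) (n d : nat) (A : 'M[R]_(n, d)) (b : 'cV[R]_n)
  (w : T -> 'cV[R]_d) (ws : nat -> T -> 'cV[R]_d) (x0 : 'cV[R]_d) :
  (exists xs : 'cV[R]_d, A *m xs = b) ->
  (forall i j, measurable_fun setT (fun om => w om i j)) ->
  (forall l i j, measurable_fun setT (fun om => ws l om i j)) ->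
  (forall l, P [set om | ((A *m ws l om)^T <= Cmx P A w)%MS] = 1%E) ->
  (forall l, P [set om | A *m ws l om != 0] = 1%E) ->
  {ae P, forall om,
    (forall l e, (0 < l)%N -> tau P A w ws om l = Some e ->
        0 <= gamma P A w ws om l < 1) /\
    (forall l e, tau P A w ws om l = Some e ->
        sqn (res A b ws x0 om e.+1 - oproj (Lmx P A w) (res A b ws x0 om 0))
        <= (\prod_(1 <= j < l.+1) gamma P A w ws om j)
           * sqn (oproj (Cmx P A w) (res A b ws x0 om 0))) /\
    (forall k,
        sqn (res A b ws x0 om k - oproj (Lmx P A w) (res A b ws x0 om 0))
        <= (\prod_(1 <= j < (Lk P A w ws om k).+1) gamma P A w ws om j)
           * sqn (oproj (Cmx P A w) (res A b ws x0 om 0)))}.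
Proof.
move=> _ _ mws us_in_C us_neq0.
have ae_in_C l : {ae P, forall om, ((A *m ws l om)^T <= Cmx P A w)%MS}.
  exact: ae_of_prob1 (measurable_tr_submx (fun i => mws l i 0) _ _) (us_in_C l).
have ae_neq0 l : {ae P, forall om, A *m ws l om != 0}.
  exact: ae_of_prob1 (measurable_mulmx_neq0 (fun i => mws l i 0) _) (us_neq0 l).
have ae_good l :
    {ae P, forall om, ((A *m ws l om)^T <= Cmx P A w)%MS /\ A *m ws l om != 0}.
  by apply: filterS2 (ae_in_C l) (ae_neq0 l).
apply: filterS (ae_foralln ae_good) => om om_good.
by apply: kaczmarz_outcome => l; case: (om_good l).
Qed.
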